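(* Let $y$ be the solution of the problem $\varepsilon^2 y''(x)=f(x,y)$ on $(0,1)$, $y(0)=y(1)=0$, with $f$ and the Shishkin mesh $\{x_i\}_{i=0}^N$ as described in the context, and let $G$ be the discrete operator defined in the context. Assume that $\varepsilon\leqslant C_0/N$ for some constant $C_0>0$. Then there is a constant $C>0$ independent of $N$ and $\varepsilon$ such that, for the indices $i\in\{N/4,\ldots,N/2-1\}$ with $x_{i-1},x_i,x_{i+1}\in[x_{N/4},1/2]$, $$|(Gy)_i|\leqslant \frac{C}{N^2},$$ where $(Gy)_i$ denotes the $i$-th component of $G$ applied to the vector $(y(x_0),\ldots,y(x_N))^T$.
   Context: Problem: $\varepsilon^2y''(x)=f(x,y)$ on $(0,1)$, $y(0)=y(1)=0$, where $\varepsilon>0$ is a small parameter, $f\in C^k([0,1]\times\mathbb{R})$ for some $k\geq 2$, and $f_y=\partial f/\partial y\geq m>0$ on $[0,1]\times\mathbb{R}$ for a constant $m$; this problem has a unique solution $y$. Shishkin mesh: $N$ is a positive integer divisible by 4, $\lambda=\min\{1/4,\,2\varepsilon\ln N/\sqrt{m}\}$, and it is assumed that $\lambda=2\varepsilon\ln N/\sqrt{m}$. The mesh $0=x_0<x_1<\cdots<x_N=1$ is equidistant on each of $[0,\lambda]$ (with $N/4$ subintervals), $[\lambda,1-\lambda]$ (with $N/2$ subintervals) and $[1-\lambda,1]$ (with $N/4$ subintervals); thus $x_{N/4}=\lambda$, $x_{3N/4}=1-\lambda$, $x_{N/2}=1/2$, subintervals in $[0,\lambda]\cup[1-\lambda,1]$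 have length $4\lambda/N$ and those in $[\lambda,1-\lambda]$ have length $2(1-2\lambda)/N$. Scheme: $\gamma$ is a constant with $\gamma\geq f_y$, and $\beta=\sqrt{\gamma}/\varepsilon$. For $i=1,\ldots,N$ let $\ell_i=x_i-x_{i-1}$, $d_i=\beta/\tanh(\beta\ell_i)$, $a_i=\beta/\sinh(\beta\ell_i)$, $\Delta d_i=d_i-a_i$. For $v=(v_0,\ldots,v_N)^T\in\mathbb{R}^{N+1}$ write $f_j=f(x_j,v_j)$ and define $Gv\in\mathbb{R}^{N+1}$ by $(Gv)_0=v_0$, $(Gv)_N=v_N$ and, for $i=1,\ldots,N-1$, $$(Gv)_i=\frac{\gamma}{\Delta d_i+\Delta d_{i+1}}\Big[(3a_i+d_i+\Delta d_{i+1})(v_{i-1}-v_i)-(3a_{i+1}+d_{i+1}+\Delta d_i)(v_i-v_{i+1})-\frac{f_{i-1}+2f_i+f_{i+1}}{\gamma}(\Delta d_i+\Delta d_{i+1})\Big].$$ *)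

From Stdlib Require Import Reals Lra Lia.
Open Scope R_scope.

Definition cont_on_strip (g : R -> R -> R) : Prop :=
  forall x t, 0 <= x <= 1 -> forall e, e > 0 -> exists d, d > 0 /\
    forall x' t', 0 <= x' <= 1 -> Rabs (x' - x) < d -> Rabs (t' - t) < d ->
      Rabs (g x' t' - g x t) < e.

Definition is_pdx (g gx : R -> R -> R) : Prop :=
  forall x t, 0 <= x <= 1 ->
    limit1_in (fun h => (g (x + h) t - g x t) / h)
              (fun h => h <> 0 /\ 0 <= x + h <= 1) (gx x t) 0.

Definition is_pdy (g gy : R -> R -> R) : Prop :=
  forall x t, 0 <= x <= 1 -> derivable_pt_lim (fun s => g x s) t (gy x t).

Fixpoint Ck (k : nat) (g : R -> R -> R) : Prop :=
  match k with
  | O => cont_on_strip g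
  | S k' => cont_on_strip g /\
      exists gx gy, is_pdx g gx /\ is_pdy g gy /\ Ck k' gx /\ Ck k' gy
  end.

Definition is_solution (eps : R) (f : R -> R -> R) (y : R -> R) : Prop :=
  (forall x, 0 <= x <= 1 -> limit1_in y (fun t => 0 <= t <= 1) (y x) x) /\
  (exists y' y'' : R -> R, forall x, 0 < x < 1 ->
      derivable_pt_lim y x (y' x) /\ derivable_pt_lim y' x (y'' x) /\
      eps ^ 2 * y'' x = f x (y x)) /\
  y 0 = 0 /\ y 1 = 0.

Definition shlambda (eps m : R) (N : nat) : R :=
  Rmin (1 / 4) (2 * eps * ln (INR N) / sqrt m).

Definition shmesh (eps m : R) (N : nat) (i : nat) : R :=
  let lam := shlambda eps m N in
  if (i <=? N / 4)%nat then INR i * (4 * lam / INR N)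
  else if (i <=? 3 * N / 4)%nat then
    lam + INR (i - N / 4) * (2 * (1 - 2 * lam) / INR N)
  else (1 - lam) + INR (i - 3 * N / 4) * (4 * lam / INR N).

Definition hstep (x : nat -> R) (i : nat) : R := x i - x (i - 1)%nat.
Definition dcoef (beta : R) (x : nat -> R) (i : nat) : R :=
  beta / tanh (beta * hstep x i).
Definition acoef (beta : R) (x : nat -> R) (i : nat) : R :=
  beta / sinh (beta * hstep x i).
Definition ddcoef (beta : R) (x : nat -> R) (i : nat) : R :=
  dcoef beta x i - acoef beta x i.

Definition Gop (gamma eps : R) (f : R -> R -> R) (N : nat) (x : nat -> R)
    (v : nat -> R) (i : nat) : R :=
  let beta := sqrt gamma / eps in
  let d := dcoef beta x in
  let a := acoef beta x in
  let dd := ddcoef beta x in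
  let fj := fun j => f (x j) (v j) in
  if (i =? 0)%nat then v 0%nat
  else if (i =? N)%nat then v N
  else
    gamma / (dd i + dd (S i)) *
      ((3 * a i + d i + dd (S i)) * (v (i - 1)%nat - v i)
       - (3 * a (S i) + d (S i) + dd i) * (v i - v (S i))
       - (fj (i - 1)%nat + 2 * fj i + fj (S i)) / gamma * (dd i + dd (S i))).

From Stdlib Require Import Reals Lra Lia.
From Coquelicot Require Import Coquelicot.
Open Scope R_scope.

(* Away from the boundary layers the solution [y] is close to the reduced solution [r],
   defined by [f(x, r(x)) = 0], which is C^2 by implicit differentiation.  The maximum
   principle with the barrier
     [K eps^2 + R0 (exp (- sqrt m x / eps) + exp (- sqrt m (1 - x) / eps))]
   bounds [|y - r|], and for [lambda <= x <= 1 - lambda] the bound is [O(N^-2)] because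
   [eps <= C0 / N] and [exp (- sqrt m lambda / eps) = N^-2].  For the indices considered the
   mesh is uniform with step [H] in [[1/N, 2/N]], where [G] reduces to
     [gamma c(t) (y_{i-1} - 2 y_i + y_{i+1}) - (f_{i-1} + 2 f_i + f_{i+1})]
   with [c(t) = (1 + cosh t) / (cosh t - 1)] and [t = beta H >= sqrt gamma / C0], so [c(t)]
   is bounded.  Writing [y = r + (y - r)], the second difference of [r] is [O(H^2)], and the
   remaining terms, like each [f_j = f(x_j, y_j) - f(x_j, r(x_j))], are [O(N^-2)]. *)

Lemma MVT_lower_bound (h h' : R -> R) lo s t :
  s <= t -> (forall c, s <= c <= t -> derivable_pt_lim h c (h' c)) ->
  (forall c, s <= c <= t -> lo <= h' c) ->
  lo * (t - s) <= h t - h s.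
Proof.
  intros Hst Hd Hb. destruct (Req_dec s t) as [<-|Hne]; [lra|].
  destruct (MVT_cor2 h h' s t) as [c [-> Hc]]; [lra|exact Hd|].
  apply Rmult_le_compat_r; [lra|apply Hb; lra].
Qed.

Lemma MVT_abs_le (h h' : R -> R) e s t :
  (forall c, Rmin s t <= c <= Rmax s t -> derivable_pt_lim h c (h' c)) ->
  (forall c, Rmin s t <= c <= Rmax s t -> Rabs (h' c) <= e) ->
  Rabs (h t - h s) <= e * Rabs (t - s).
Proof.
  assert (Hle : forall a b, a <= b ->
    (forall c, a <= c <= b -> derivable_pt_lim h c (h' c)) ->
    (forall c, a <= c <= b -> Rabs (h' c) <= e) ->
    Rabs (h b - h a) <= e * (b - a)).
  { intros a b Hab Hd Hb. destruct (Req_dec a b) as [<-|Hne].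
    - rewrite Rminus_diag, Rabs_R0; lra.
    - destruct (MVT_cor2 h h' a b) as [c [-> Hc]]; [lra|exact Hd|].
      rewrite Rabs_mult, (Rabs_right (b - a)) by lra.
      apply Rmult_le_compat_r; [lra|apply Hb; lra]. }
  intros Hd Hb. destruct (Rle_dec s t) as [Hst|Hst].
  - rewrite Rmin_left, Rmax_right in * by lra.
    rewrite (Rabs_right (t - s)) by lra. now apply Hle.
  - rewrite Rmin_right, Rmax_left in * by lra.
    rewrite <- Rabs_Ropp, Ropp_minus_distr, (Rabs_left (t - s)) by lra.
    rewrite Ropp_minus_distr. apply Hle; auto; lra.
Qed.

Lemma derivable_pt_lim_of_approx (F : R -> R) x L :
  0 < x < 1 ->
  (forall e, 0 < e -> exists d, 0 < d /\ forall h, h <> 0 -> Rabs h < d ->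
     0 <= x + h <= 1 -> Rabs (F (x + h) - F x - L * h) <= e * Rabs h) ->
  derivable_pt_lim F x L.
Proof.
  intros Hx Happrox e He.
  destruct (Happrox (e / 2) ltac:(lra)) as [d [Hd Hb]].
  assert (Hd' : 0 < Rmin d (Rmin x (1 - x))) by (repeat apply Rmin_pos; lra).
  exists (mkposreal _ Hd'). intros h Hh0 Hh. simpl in Hh.
  pose proof (Rmin_l d (Rmin x (1 - x))). pose proof (Rmin_r d (Rmin x (1 - x))).
  pose proof (Rmin_l x (1 - x)). pose proof (Rmin_r x (1 - x)).
  assert (Hxh : 0 <= x + h <= 1) by (apply Rabs_def2 in Hh; lra).
  assert (Hhp : 0 < Rabs h) by now apply Rabs_pos_lt.
  specialize (Hb h Hh0 ltac:(lra) Hxh).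
  replace ((F (x + h) - F x) / h - L) with ((F (x + h) - F x - L * h) / h) by (field; auto).
  unfold Rdiv. rewrite Rabs_mult, Rabs_inv.
  apply (Rmult_lt_reg_r (Rabs h)); [lra|].
  rewrite Rmult_assoc, Rinv_l by lra. nra.
Qed.

Lemma approx_of_derivable_pt_lim (F : R -> R) x L :
  derivable_pt_lim F x L ->
  forall e, 0 < e -> exists d, 0 < d /\ forall h, h <> 0 -> Rabs h < d ->
    Rabs (F (x + h) - F x - L * h) <= e * Rabs h.
Proof.
  intros HF e He. destruct (HF e He) as [d Hd].
  exists d. split; [apply cond_pos|]. intros h Hh0 Hh.
  specialize (Hd h Hh0 Hh).
  replace (F (x + h) - F x - L * h) with (((F (x + h) - F x) / h - L) * h) by (field; auto).
  rewrite Rabs_mult. apply Rmult_le_compat_r; [apply Rabs_pos|lra].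
Qed.

Lemma derivable_pt_lim_pos_right (g : R -> R) x l :
  derivable_pt_lim g x l -> 0 < l ->
  exists d, 0 < d /\ forall h, 0 < h < d -> g x < g (x + h).
Proof.
  intros Hg Hl. destruct (Hg l Hl) as [d Hd].
  exists d. split; [apply cond_pos|]. intros h Hh.
  specialize (Hd h ltac:(lra) ltac:(rewrite Rabs_right; lra)).
  apply Rabs_def2 in Hd.
  assert (Hq : 0 < (g (x + h) - g x) / h) by lra.
  assert (E : g (x + h) - g x = (g (x + h) - g x) / h * h) by (field; lra).
  assert (0 < (g (x + h) - g x) / h * h) by (apply Rmult_lt_0_compat; lra). lra.
Qed.

Lemma interior_max_second_derivative (psi psi1 : R -> R) a b x0 L :
  a < x0 < b ->
  (forall x, a < x < b -> derivable_pt_lim psi x (psi1 x)) ->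
  derivable_pt_lim psi1 x0 L ->
  (forall x, a < x < b -> psi x <= psi x0) ->
  L <= 0.
Proof.
  intros Hx0 Hd HL Hmax. apply Rnot_lt_le. intros HL0.
  assert (Hcrit : psi1 x0 = 0).
  { exact (deriv_maximum psi a b x0 (exist _ (psi1 x0) (Hd x0 Hx0)) (proj1 Hx0) (proj2 Hx0)
             (fun x H1 H2 => Hmax x (conj H1 H2))). }
  destruct (derivable_pt_lim_pos_right psi1 x0 L HL HL0) as [d [Hd0 Hincr]].
  set (h := Rmin d (b - x0) / 2).
  assert (Hh : 0 < h < Rmin d (b - x0))
    by (assert (0 < Rmin d (b - x0)) by (apply Rmin_pos; lra); unfold h; lra).
  pose proof (Rmin_l d (b - x0)). pose proof (Rmin_r d (b - x0)).
  destruct (MVT_cor2 psi psi1 x0 (x0 + h)) as [c [Ec Hc]]; [lra| intros; apply Hd; lra|].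
  specialize (Hincr (c - x0) ltac:(lra)). replace (x0 + (c - x0)) with c in Hincr by ring.
  pose proof (Hmax (x0 + h) ltac:(lra)).
  assert (0 < psi1 c * (x0 + h - x0)) by (apply Rmult_lt_0_compat; lra). lra.
Qed.

Lemma second_difference_bound (g g' g'' : R -> R) B x H :
  0 < H ->
  (forall c, x - H <= c <= x + H -> derivable_pt_lim g c (g' c)) ->
  (forall c, x - H <= c <= x + H -> derivable_pt_lim g' c (g'' c)) ->
  (forall c, x - H <= c <= x + H -> Rabs (g'' c) <= B) ->
  Rabs (g (x - H) - 2 * g x + g (x + H)) <= 2 * B * H ^ 2.
Proof.
  intros HH Dg Dg' Hb.
  destruct (MVT_cor2 g g' x (x + H)) as [c1 [E1 C1]]; [lra| intros; apply Dg; lra|].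
  destruct (MVT_cor2 g g' (x - H) x) as [c2 [E2 C2]]; [lra| intros; apply Dg; lra|].
  destruct (MVT_cor2 g' g'' c2 c1) as [c3 [E3 C3]]; [lra| intros; apply Dg'; lra|].
  replace (g (x - H) - 2 * g x + g (x + H)) with ((g' c1 - g' c2) * H)
    by (replace (x + H - x) with H in E1 by ring; replace (x - (x - H)) with H in E2 by ring; nra).
  rewrite E3, !Rabs_mult, (Rabs_right H), (Rabs_right (c1 - c2)) by lra.
  specialize (Hb c3 ltac:(lra)). pose proof (Rabs_pos (g'' c3)).
  replace (2 * B * H ^ 2) with (B * (2 * H) * H) by ring.
  apply Rmult_le_compat_r; [lra|]. apply Rmult_le_compat; lra.
Qed.

Lemma increasing_root (g g' : R -> R) m :
  0 < m -> (forall t, derivable_pt_lim g t (g' t)) -> (forall t, m <= g' t) ->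
  {t | g t = 0}.
Proof.
  intros Hm Hd Hb. set (T := Rabs (g 0) / m).
  assert (HT : m * T = Rabs (g 0)) by (unfold T; field; lra).
  assert (HT0 : 0 <= T) by (pose proof (Rabs_pos (g 0)); nra).
  pose proof (MVT_lower_bound g g' m 0 T HT0 (fun c _ => Hd c) (fun c _ => Hb c)).
  pose proof (MVT_lower_bound g g' m (- T) 0 ltac:(lra) (fun c _ => Hd c) (fun c _ => Hb c)).
  assert (g (- T) <= 0 <= g T) by (unfold Rabs in HT; destruct Rcase_abs; nra).
  destruct (IVT_cor g (- T) T) as [z [_ Hz]]; [| lra | nra | now exists z].
  intros t. apply derivable_continuous_pt. exists (g' t). apply Hd.
Qed.

Lemma cosh_sub1_ge t : 0 <= t -> t ^ 2 / 8 <= cosh t - 1.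
Proof.
  intros Ht. unfold cosh.
  set (p := exp (t / 2)). set (q := exp (- (t / 2))).
  assert (Hp : exp t = p * p) by (unfold p; rewrite <- exp_plus; f_equal; field).
  assert (Hq : exp (- t) = q * q) by (unfold q; rewrite <- exp_plus; f_equal; field).
  assert (Hpq : p * q = 1) by (unfold p, q; rewrite <- exp_plus, Rplus_opp_r; apply exp_0).
  assert (Hp1 : 1 + t / 2 <= p) by apply exp_ineq1_le.
  assert (Hq0 : 0 < q) by apply exp_pos.
  assert (Hq1 : q <= 1) by nra.
  rewrite Hp, Hq.
  replace ((p * p + q * q) / 2 - 1) with ((p - q) ^ 2 / 2) by (rewrite <- Hpq; field).
  assert ((t / 2) ^ 2 <= (p - q) ^ 2) by (apply pow_incr; lra). lra.
Qed.

(** * Continuity on [0,1] *)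

Definition clamp01 (x : R) : R := Rmax 0 (Rmin 1 x).

Lemma clamp01_in x : 0 <= clamp01 x <= 1.
Proof. unfold clamp01, Rmax, Rmin; repeat destruct Rle_dec; lra. Qed.

Lemma clamp01_id x : 0 <= x <= 1 -> clamp01 x = x.
Proof. unfold clamp01, Rmax, Rmin; intros; repeat destruct Rle_dec; lra. Qed.

Lemma clamp01_lipschitz x y : Rabs (clamp01 x - clamp01 y) <= Rabs (x - y).
Proof.
  unfold clamp01, Rmax, Rmin; repeat destruct Rle_dec; unfold Rabs; repeat destruct Rcase_abs; lra.
Qed.

Definition cont01 (g : R -> R) : Prop :=
  forall c, 0 <= c <= 1 -> forall e, e > 0 -> exists d, d > 0 /\
    forall x, 0 <= x <= 1 -> Rabs (x - c) < d -> Rabs (g x - g c) < e.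

(* Extending [g] by constants outside [0,1] turns continuity on [0,1] into
   continuity on R, where the closure and extremum lemmas of Stdlib apply. *)
Lemma cont01_clamp g : cont01 g <-> forall c, continuity_pt (fun x => g (clamp01 x)) c.
Proof.
  split.
  - intros Hg c e He. destruct (Hg (clamp01 c) (clamp01_in c) e He) as [d [Hd H]].
    exists d. split; [exact Hd|]. intros x [_ Hx]. apply H; [apply clamp01_in|].
    eapply Rle_lt_trans; [apply clamp01_lipschitz|exact Hx].
  - intros Hg c Hc e He. destruct (Hg c e He) as [d [Hd H]].
    exists d. split; [exact Hd|]. intros x Hx Hxc.
    destruct (Req_dec x c) as [->|Hne]; [rewrite Rminus_diag, Rabs_R0; lra|].
    specialize (H x (conj (conj I (not_eq_sym Hne)) Hxc)). simpl in H.
    now rewrite !clamp01_id in H.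
Qed.

Lemma cont01_continuity g : (forall c, continuity_pt g c) -> cont01 g.
Proof.
  intros Hg c Hc e He. destruct (Hg c e He) as [d [Hd H]].
  exists d. split; [exact Hd|]. intros x _ Hxc.
  destruct (Req_dec x c) as [->|Hne]; [rewrite Rminus_diag, Rabs_R0; lra|].
  exact (H x (conj (conj I (not_eq_sym Hne)) Hxc)).
Qed.

Lemma cont01_plus g h : cont01 g -> cont01 h -> cont01 (fun x => g x + h x).
Proof. rewrite !cont01_clamp. intros Hg Hh c. exact (continuity_pt_plus _ _ c (Hg c) (Hh c)). Qed.

Lemma cont01_minus g h : cont01 g -> cont01 h -> cont01 (fun x => g x - h x).
Proof. rewrite !cont01_clamp. intros Hg Hh c. exact (continuity_pt_minus _ _ c (Hg c) (Hh c)). Qed.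

Lemma cont01_mult g h : cont01 g -> cont01 h -> cont01 (fun x => g x * h x).
Proof. rewrite !cont01_clamp. intros Hg Hh c. exact (continuity_pt_mult _ _ c (Hg c) (Hh c)). Qed.

Lemma cont01_opp g : cont01 g -> cont01 (fun x => - g x).
Proof. rewrite !cont01_clamp. intros Hg c. exact (continuity_pt_opp _ c (Hg c)). Qed.

Lemma cont01_div g h :
  cont01 g -> cont01 h -> (forall x, 0 <= x <= 1 -> h x <> 0) -> cont01 (fun x => g x / h x).
Proof.
  rewrite !cont01_clamp. intros Hg Hh Hn c.
  exact (continuity_pt_div _ _ c (Hg c) (Hh c) (Hn _ (clamp01_in c))).
Qed.

Lemma cont01_max g : cont01 g -> exists x0, 0 <= x0 <= 1 /\ forall x, 0 <= x <= 1 -> g x <= g x0.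
Proof.
  rewrite cont01_clamp. intros Hg.
  destruct (continuity_ab_maj (fun x => g (clamp01 x)) 0 1) as [M [HM HM1]]; [lra|auto|].
  exists M. split; [exact HM1|]. intros x Hx. specialize (HM x Hx).
  now rewrite !clamp01_id in HM.
Qed.

Lemma cont01_bounded g : cont01 g -> exists B, 0 <= B /\ forall x, 0 <= x <= 1 -> Rabs (g x) <= B.
Proof.
  intros Hg. destruct (cont01_max g Hg) as [a [Ha Hmax]].
  destruct (cont01_max _ (cont01_opp g Hg)) as [b [Hb Hmin]].
  pose proof (Rabs_pos (g a)). pose proof (Rabs_pos (g b)).
  exists (Rabs (g a) + Rabs (g b)). split; [lra|].
  intros x Hx. specialize (Hmax x Hx). specialize (Hmin x Hx).
  unfold Rabs; repeat destruct Rcase_abs; lra.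
Qed.

Lemma max_principle (psi psi1 psi2 : R -> R) :
  cont01 psi -> psi 0 <= 0 -> psi 1 <= 0 ->
  (forall x, 0 < x < 1 -> derivable_pt_lim psi x (psi1 x)) ->
  (forall x, 0 < x < 1 -> derivable_pt_lim psi1 x (psi2 x)) ->
  (forall x, 0 < x < 1 -> 0 < psi x -> 0 < psi2 x) ->
  forall x, 0 <= x <= 1 -> psi x <= 0.
Proof.
  intros Hc H0 H1 Hd Hd1 Hpos.
  destruct (cont01_max psi Hc) as [x0 [Hx0 Hmax]].
  intros x Hx. apply Rle_trans with (psi x0); [now apply Hmax|].
  apply Rnot_lt_le. intros Hgt.
  assert (Hin : 0 < x0 < 1).
  { destruct (Req_dec x0 0) as [->|]; [lra|]. destruct (Req_dec x0 1) as [->|]; lra. }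
  pose proof (interior_max_second_derivative psi psi1 0 1 x0 (psi2 x0) Hin Hd (Hd1 x0 Hin)
                (fun x Hx => Hmax x ltac:(lra))).
  pose proof (Hpos x0 Hin Hgt). lra.
Qed.

(** * Functions on the strip [[0,1] x R] *)

Lemma Ck_S k g : Ck (S k) g -> Ck k g.
Proof.
  revert g. induction k as [|k IH]; intros g Hg; [exact (proj1 Hg)|].
  destruct Hg as [Hc [gx [gy [Hx [Hy [Hgx Hgy]]]]]].
  split; [exact Hc|]. exists gx, gy. auto.
Qed.

Lemma Ck_le j k g : (j <= k)%nat -> Ck k g -> Ck j g.
Proof. induction 1; auto using Ck_S. Qed.

Lemma is_pdy_unique g gy gy' x t :
  is_pdy g gy -> is_pdy g gy' -> 0 <= x <= 1 -> gy x t = gy' x t.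
Proof. intros H H' Hx. exact (uniqueness_limite _ _ _ _ (H x t Hx) (H' x t Hx)). Qed.

Lemma cont01_strip_comp (G : R -> R -> R) (r : R -> R) :
  cont_on_strip G -> cont01 r -> cont01 (fun x => G x (r x)).
Proof.
  intros HG Hr c Hc e He.
  destruct (HG c (r c) Hc e He) as [d [Hd H]].
  destruct (Hr c Hc d Hd) as [d' [Hd' H']].
  exists (Rmin d d'). split; [now apply Rmin_pos|].
  intros x Hx Hxc. pose proof (Rmin_l d d'). pose proof (Rmin_r d d').
  apply H; [exact Hx|lra|]. apply H'; [exact Hx|lra].
Qed.

Lemma is_pdy_uniform_approx (G Gy : R -> R -> R) x t0 :
  is_pdy G Gy -> cont_on_strip Gy -> 0 <= x <= 1 ->
  forall e, e > 0 -> exists d, d > 0 /\ forall x' t, 0 <= x' <= 1 ->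
    Rabs (x' - x) < d -> Rabs (t - t0) < d ->
    Rabs (G x' t - G x' t0 - Gy x t0 * (t - t0)) <= e * Rabs (t - t0).
Proof.
  intros HGy HcGy Hx e He. destruct (HcGy x t0 Hx e He) as [d [Hd Hcont]].
  exists d. split; [exact Hd|]. intros x' t Hx' Hxx' Ht.
  replace (G x' t - G x' t0 - Gy x t0 * (t - t0))
    with ((G x' t - Gy x t0 * t) - (G x' t0 - Gy x t0 * t0)) by ring.
  apply (MVT_abs_le (fun s => G x' s - Gy x t0 * s) (fun s => Gy x' s - Gy x t0)).
  - intros c _. apply derivable_pt_lim_minus; [now apply HGy|].
    rewrite <- (Rmult_1_r (Gy x t0)) at 2.
    apply derivable_pt_lim_scal, derivable_pt_lim_id.
  - intros c Hc. left. apply Hcont; [exact Hx'|exact Hxx'|].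
    unfold Rmin, Rmax in Hc; destruct Rle_dec; unfold Rabs in *;
      repeat destruct Rcase_abs; lra.
Qed.

Lemma strip_linearization (G Gx Gy : R -> R -> R) (r : R -> R) x :
  is_pdx G Gx -> is_pdy G Gy -> cont_on_strip Gy -> cont01 r -> 0 <= x <= 1 ->
  forall e, e > 0 -> exists d, d > 0 /\ forall h, h <> 0 -> Rabs h < d -> 0 <= x + h <= 1 ->
    Rabs (G (x + h) (r (x + h)) - G x (r x) - Gx x (r x) * h - Gy x (r x) * (r (x + h) - r x))
      <= e * (Rabs h + Rabs (r (x + h) - r x)).
Proof.
  intros HGx HGy HcGy Hr Hx e He.
  destruct (HGx x (r x) Hx e He) as [d1 [Hd1 Lx]]. simpl in Lx. unfold R_dist in Lx.
  destruct (is_pdy_uniform_approx G Gy x (r x) HGy HcGy Hx e He) as [d2 [Hd2 Ly]].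
  destruct (Hr x Hx d2 Hd2) as [d3 [Hd3 Hr3]].
  exists (Rmin d1 (Rmin d2 d3)). split; [repeat apply Rmin_pos; lra|].
  intros h Hh0 Hh Hxh.
  pose proof (Rmin_l d1 (Rmin d2 d3)). pose proof (Rmin_r d1 (Rmin d2 d3)).
  pose proof (Rmin_l d2 d3). pose proof (Rmin_r d2 d3).
  assert (Hxh' : Rabs (x + h - x) < Rmin d2 d3) by (replace (x + h - x) with h by ring; lra).
  assert (Hrh : Rabs (r (x + h) - r x) < d2) by (apply Hr3; [exact Hxh|lra]).
  assert (Ax : Rabs (G (x + h) (r x) - G x (r x) - Gx x (r x) * h) <= e * Rabs h).
  { assert (Q : Rabs ((G (x + h) (r x) - G x (r x)) / h - Gx x (r x)) < e).
    { apply Lx. split; [split; auto|]. rewrite Rminus_0_r. lra. }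
    replace (G (x + h) (r x) - G x (r x) - Gx x (r x) * h)
      with (((G (x + h) (r x) - G x (r x)) / h - Gx x (r x)) * h) by (field; auto).
    rewrite Rabs_mult. apply Rmult_le_compat_r; [apply Rabs_pos|lra]. }
  specialize (Ly (x + h) (r (x + h)) Hxh ltac:(lra) Hrh).
  eapply Rle_trans; [|rewrite Rmult_plus_distr_l; apply Rplus_le_compat; [exact Ax|exact Ly]].
  eapply Rle_trans; [|apply Rabs_triang]. right. f_equal. ring.
Qed.

Lemma strip_comp_derivable (G Gx Gy : R -> R -> R) (r : R -> R) x r1 :
  is_pdx G Gx -> is_pdy G Gy -> cont_on_strip Gy -> cont01 r -> 0 < x < 1 ->
  derivable_pt_lim r x r1 ->
  derivable_pt_lim (fun s => G s (r s)) x (Gx x (r x) + Gy x (r x) * r1).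
Proof.
  intros HGx HGy HcGy Hr Hx Hr1.
  apply derivable_pt_lim_of_approx; [exact Hx|]. intros e He.
  set (A := Gy x (r x)).
  set (eta := e / (2 * (2 + Rabs r1))).
  set (e2 := Rmin 1 (e / (2 * (Rabs A + 1)))).
  pose proof (Rabs_pos r1). pose proof (Rabs_pos A).
  assert (Heta : 0 < eta) by (apply Rdiv_lt_0_compat; lra).
  assert (He2 : 0 < e2) by (apply Rmin_pos; [lra|apply Rdiv_lt_0_compat; lra]).
  assert (He2A : Rabs A * e2 <= e / 2).
  { apply Rle_trans with (Rabs A * (e / (2 * (Rabs A + 1)))).
    - apply Rmult_le_compat_l; [lra|apply Rmin_r].
    - apply (Rmult_le_reg_r (2 * (Rabs A + 1))); [lra|].
      field_simplify; [nra|lra]. }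
  destruct (strip_linearization G Gx Gy r x HGx HGy HcGy Hr ltac:(lra) eta Heta) as [d1 [Hd1 Hlin]].
  destruct (approx_of_derivable_pt_lim r x r1 Hr1 e2 He2) as [d2 [Hd2 Hdr]].
  exists (Rmin d1 d2). split; [now apply Rmin_pos|].
  intros h Hh0 Hh Hxh. pose proof (Rmin_l d1 d2). pose proof (Rmin_r d1 d2).
  specialize (Hlin h Hh0 ltac:(lra) Hxh). specialize (Hdr h Hh0 ltac:(lra)).
  fold A in Hlin. set (Dr := r (x + h) - r x) in *.
  assert (He21 : e2 <= 1) by apply Rmin_l.
  assert (HDr : Rabs Dr <= (Rabs r1 + 1) * Rabs h).
  { replace Dr with ((Dr - r1 * h) + r1 * h) by ring.
    eapply Rle_trans; [apply Rabs_triang|]. rewrite Rabs_mult.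
    pose proof (Rabs_pos h). nra. }
  assert (Hlin' : eta * (Rabs h + Rabs Dr) <= e / 2 * Rabs h).
  { apply Rle_trans with (eta * ((2 + Rabs r1) * Rabs h)).
    - apply Rmult_le_compat_l; lra.
    - right. unfold eta. field. lra. }
  replace (G (x + h) (r (x + h)) - G x (r x) - (Gx x (r x) + A * r1) * h)
    with ((G (x + h) (r (x + h)) - G x (r x) - Gx x (r x) * h - A * Dr) + A * (Dr - r1 * h))
    by (unfold Dr; ring).
  eapply Rle_trans; [apply Rabs_triang|]. rewrite Rabs_mult.
  assert (Rabs A * Rabs (Dr - r1 * h) <= Rabs A * e2 * Rabs h)
    by (rewrite Rmult_assoc; apply Rmult_le_compat_l; lra).
  pose proof (Rabs_pos h). nra.
Qed.

(** * The reduced solution *)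

Section MonotoneReaction.

Variables (f fy : R -> R -> R) (m : R).
Hypothesis Hm : 0 < m.
Hypothesis Hfy : is_pdy f fy.
Hypothesis Hfy_ge : forall x t, 0 <= x <= 1 -> m <= fy x t.

Lemma f_increment_ge x s t : 0 <= x <= 1 -> s <= t -> m * (t - s) <= f x t - f x s.
Proof.
  intros Hx Hst. apply (MVT_lower_bound (f x) (fy x)); [exact Hst| |];
    intros c _; [now apply Hfy|now apply Hfy_ge].
Qed.

Lemma f_increment_abs_ge x s t : 0 <= x <= 1 -> m * Rabs (t - s) <= Rabs (f x t - f x s).
Proof.
  intros Hx. destruct (Rle_dec s t) as [Hst|Hst].
  - pose proof (f_increment_ge x s t Hx Hst). rewrite !Rabs_right; nra.
  - pose proof (f_increment_ge x t s Hx ltac:(lra)). rewrite !Rabs_left1; nra.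
Qed.

Lemma f_abs_le_of_root gamma x s t :
  (forall x t, 0 <= x <= 1 -> fy x t <= gamma) -> 0 <= x <= 1 -> f x s = 0 ->
  Rabs (f x t) <= gamma * Rabs (t - s).
Proof.
  intros Hfy_le Hx Hs. rewrite <- (Rminus_0_r (f x t)), <- Hs.
  apply (MVT_abs_le (f x) (fy x)); intros c _; [now apply Hfy|].
  pose proof (Hfy_ge x c Hx). pose proof (Hfy_le x c Hx). rewrite Rabs_right; lra.
Qed.

Lemma reduced_root_exists : exists r, forall x, 0 <= x <= 1 -> f x (r x) = 0.
Proof.
  exists (fun x => proj1_sig (increasing_root (f (clamp01 x)) (fy (clamp01 x)) m Hm
            (fun t => Hfy _ t (clamp01_in x)) (fun t => Hfy_ge _ t (clamp01_in x)))).
  intros x Hx. destruct increasing_root as [t Ht]. simpl. now rewrite clamp01_id in Ht.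
Qed.

Variable r : R -> R.
Hypothesis Hroot : forall x, 0 <= x <= 1 -> f x (r x) = 0.

Lemma reduced_root_cont01 : cont_on_strip f -> cont01 r.
Proof.
  intros Hf c Hc e He.
  destruct (Hf c (r c) Hc (m * e) ltac:(nra)) as [d [Hd Hcont]].
  exists d. split; [exact Hd|]. intros x Hx Hxc.
  specialize (Hcont x (r c) Hx Hxc ltac:(rewrite Rminus_diag, Rabs_R0; lra)).
  rewrite (Hroot c Hc), Rminus_0_r in Hcont.
  pose proof (f_increment_abs_ge x (r c) (r x) Hx) as Hinc.
  rewrite (Hroot x Hx), Rminus_0_l, Rabs_Ropp in Hinc.
  nra.
Qed.

(* As [fy >= m], the linearization of [f(x, r(x)) = 0] first bounds [r(x+h) - r(x)] by a
   multiple of [h] and then determines it up to [o(h)]. *)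
Lemma reduced_root_derivable fx x :
  is_pdx f fx -> cont_on_strip fy -> cont01 r -> 0 < x < 1 ->
  derivable_pt_lim r x (- fx x (r x) / fy x (r x)).
Proof.
  intros Hfx Hcfy Hr Hx.
  apply derivable_pt_lim_of_approx; [exact Hx|]. intros e He.
  set (P := fx x (r x)). set (Q := fy x (r x)).
  assert (HQ : m <= Q) by (apply Hfy_ge; lra).
  pose proof (Rabs_pos P).
  set (K := 1 + 2 * Rabs P / m).
  assert (HK : 1 <= K) by (unfold K; assert (0 <= Rabs P / m) by (apply Rdiv_le_0_compat; lra); lra).
  set (eta := Rmin (m / 2) (e * m / (1 + K))).
  assert (Heta : 0 < eta) by (apply Rmin_pos; [lra|apply Rdiv_lt_0_compat; nra]).
  assert (Heta1 : eta <= m / 2) by apply Rmin_l.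
  assert (Heta2 : eta * (1 + K) <= e * m).
  { apply Rle_trans with (e * m / (1 + K) * (1 + K)).
    - apply Rmult_le_compat_r; [lra|apply Rmin_r].
    - right. field. lra. }
  destruct (strip_linearization f fx fy r x Hfx Hfy Hcfy Hr ltac:(lra) eta Heta) as [d [Hd Hlin]].
  exists d. split; [exact Hd|]. intros h Hh0 Hh Hxh.
  specialize (Hlin h Hh0 Hh Hxh).
  rewrite (Hroot (x + h) Hxh), (Hroot x ltac:(lra)) in Hlin. fold P Q in Hlin.
  set (D := r (x + h) - r x) in *.
  replace (0 - 0 - P * h - Q * D) with (- (Q * D + P * h)) in Hlin by ring.
  rewrite Rabs_Ropp in Hlin.
  assert (HQD : m * Rabs (D + P / Q * h) <= eta * (Rabs h + Rabs D)).
  { replace (Q * D + P * h) with (Q * (D + P / Q * h)) in Hlin by (field; lra).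
    rewrite Rabs_mult, (Rabs_right Q) in Hlin by lra.
    pose proof (Rabs_pos (D + P / Q * h)). nra. }
  assert (HPQ : Rabs (P / Q * h) <= Rabs P / m * Rabs h).
  { rewrite Rabs_mult. apply Rmult_le_compat_r; [apply Rabs_pos|].
    unfold Rdiv. rewrite Rabs_mult, Rabs_inv, (Rabs_right Q) by lra.
    apply Rmult_le_compat_l; [lra|]. apply Rinv_le_contravar; lra. }
  assert (HD : Rabs D <= K * Rabs h).
  { assert (Rabs D <= Rabs (D + P / Q * h) + Rabs (P / Q * h)).
    { replace D with ((D + P / Q * h) + - (P / Q * h)) at 1 by ring.
      rewrite <- (Rabs_Ropp (P / Q * h)). apply Rabs_triang. }
    assert (m * Rabs (D + P / Q * h) <= m / 2 * (Rabs h + Rabs D)).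
    { eapply Rle_trans; [exact HQD|].
      pose proof (Rabs_pos h). pose proof (Rabs_pos D). apply Rmult_le_compat_r; lra. }
    assert (Rabs P / m * Rabs h * m = Rabs P * Rabs h) by (field; lra).
    unfold K. pose proof (Rabs_pos h). nra. }
  replace (D - - P / Q * h) with (D + P / Q * h) by (field; lra).
  apply (Rmult_le_reg_l m); [lra|].
  eapply Rle_trans; [exact HQD|].
  pose proof (Rabs_pos h). nra.
Qed.

End MonotoneReaction.

Definition reduced_solution (f : R -> R -> R) (r : R -> R) (B : R) : Prop :=
  cont01 r /\ (forall x, 0 <= x <= 1 -> f x (r x) = 0) /\
  exists r' r'' : R -> R,
    (forall x, 0 < x < 1 -> derivable_pt_lim r x (r' x)) /\
    (forall x, 0 < x < 1 -> derivable_pt_lim r' x (r'' x)) /\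
    (forall x, 0 < x < 1 -> Rabs (r'' x) <= B).

Lemma reduced_solution_exists k (f fy : R -> R -> R) m :
  (2 <= k)%nat -> Ck k f -> is_pdy f fy -> 0 < m ->
  (forall x t, 0 <= x <= 1 -> m <= fy x t) ->
  exists (r : R -> R) (B : R), 0 <= B /\ reduced_solution f r B.
Proof.
  intros Hk HCk Hfy Hm Hfy_ge.
  destruct (Ck_le 2 k f Hk HCk) as (Hcf & fx & gy & Hfx & Hgy &
    (Hcfx & fxx & fxy & Hfxx & Hfxy & Hcfxx & Hcfxy) &
    (Hcgy & gyx & gyy & Hgyx & Hgyy & Hcgyx & Hcgyy)).
  assert (Hgy_ge : forall x t, 0 <= x <= 1 -> m <= gy x t)
    by (intros x t Hx; rewrite <- (is_pdy_unique f fy gy x t Hfy Hgy Hx); auto).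
  destruct (reduced_root_exists f gy m Hm Hgy Hgy_ge) as [r Hroot].
  pose proof (reduced_root_cont01 f gy m Hm Hgy Hgy_ge r Hroot Hcf) as Hr.
  set (P := fun x => fx x (r x)). set (Q := fun x => gy x (r x)).
  set (r' := fun x => - P x / Q x).
  set (P' := fun x => fxx x (r x) + fxy x (r x) * r' x).
  set (Q' := fun x => gyx x (r x) + gyy x (r x) * r' x).
  set (r'' := fun x => ((- P' x) * Q x - Q' x * (- P x)) / (Q x)²).
  assert (HQ : forall x, 0 <= x <= 1 -> Q x <> 0)
    by (intros x Hx; unfold Q; pose proof (Hgy_ge x (r x) Hx); lra).
  assert (HQ2 : forall x, 0 <= x <= 1 -> (Q x)² <> 0)
    by (intros x Hx; unfold Rsqr; apply Rmult_integral_contrapositive; auto).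
  assert (Dr : forall x, 0 < x < 1 -> derivable_pt_lim r x (r' x))
    by (intros x Hx; exact (reduced_root_derivable f gy m Hm Hgy Hgy_ge r Hroot fx x Hfx Hcgy Hr Hx)).
  assert (Dr' : forall x, 0 < x < 1 -> derivable_pt_lim r' x (r'' x)).
  { intros x Hx.
    apply (derivable_pt_lim_div (fun x => - P x) Q); [|unfold Q, Q'|apply HQ; lra].
    - apply derivable_pt_lim_opp. unfold P, P'. apply strip_comp_derivable; auto.
    - apply strip_comp_derivable; auto. }
  assert (Hcr'' : cont01 r'').
  { unfold r'', P', Q', r', P, Q, Rsqr.
    repeat first [ assumption | apply cont01_div | apply cont01_minus | apply cont01_plus
                 | apply cont01_mult | apply cont01_opp | apply cont01_strip_comp ]. }
  destruct (cont01_bounded r'' Hcr'') as [B [HB Hbound]].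
  exists r, B. split; [exact HB|]. split; [exact Hr|]. split; [exact Hroot|].
  exists r', r''. repeat split; auto. intros x Hx. apply Hbound. lra.
Qed.

Lemma reduced_second_difference f r B xi H :
  reduced_solution f r B -> 0 < H -> 0 < xi - H -> xi + H < 1 ->
  Rabs (r (xi - H) - 2 * r xi + r (xi + H)) <= 2 * B * H ^ 2.
Proof.
  intros (_ & _ & r' & r'' & Dr & Dr' & Hr'') HH Hl Hr.
  apply (second_difference_bound r r' r''); auto; intros; [apply Dr|apply Dr'|apply Hr'']; lra.
Qed.

(** * Comparison with the reduced solution *)

Definition layer_profile (a x : R) : R := exp (- a * x) + exp (- a * (1 - x)).

Definition layer_barrier (K R0 a x : R) : R := K + R0 * layer_profile a x.

Lemma layer_profile_pos a x : 0 < layer_profile a x.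
Proof.
  unfold layer_profile. pose proof (exp_pos (- a * x)). pose proof (exp_pos (- a * (1 - x))). lra.
Qed.

Lemma layer_barrier_derivatives K R0 a x :
  derivable_pt_lim (layer_barrier K R0 a) x
    (R0 * (- a * exp (- a * x) + a * exp (- a * (1 - x)))) /\
  derivable_pt_lim (fun x => R0 * (- a * exp (- a * x) + a * exp (- a * (1 - x)))) x
    (R0 * a ^ 2 * layer_profile a x).
Proof.
  unfold layer_barrier, layer_profile.
  split; apply is_derive_Reals; auto_derive; auto; replace (1 + - x) with (1 - x) by ring; ring.
Qed.

Lemma solution_cont01 eps f y : is_solution eps f y -> cont01 y.
Proof.
  intros [Hc _] c Hc01 e He. destruct (Hc c Hc01 e He) as [d [Hd H]].
  exists d. split; [exact Hd|]. intros x Hx Hxc. exact (H x (conj Hx Hxc)).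
Qed.

Lemma layer_barrier_endpoint_ge K R0 a x :
  0 <= K -> 0 <= R0 -> x = 0 \/ x = 1 -> K + R0 <= layer_barrier K R0 a x.
Proof.
  intros HK HR0 Hx. unfold layer_barrier.
  assert (1 <= layer_profile a x).
  { unfold layer_profile. pose proof (exp_pos (- a * x)). pose proof (exp_pos (- a * (1 - x))).
    destruct Hx as [-> | ->]; [rewrite Rmult_0_r|rewrite Rminus_diag, Rmult_0_r]; rewrite exp_0; lra. }
  assert (R0 * 1 <= R0 * layer_profile a x) by (apply Rmult_le_compat_l; lra).
  lra.
Qed.

(* Where [s (y - r)] exceeds the barrier, the reaction term [f(x, y) - f(x, r) >= m (y - r)]
   dominates both the [O(eps^2)] defect [eps^2 r''] of [r] and the curvature of the barrier. *)
Lemma layer_barrier_defect_pos (f fy : R -> R -> R) m eps B R0 s (y r : R -> R) y'' r'' z :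
  is_pdy f fy -> (forall x t, 0 <= x <= 1 -> m <= fy x t) -> 0 < m -> 0 < eps ->
  0 <= B -> 0 <= R0 -> s = 1 \/ s = -1 -> 0 <= z <= 1 -> f z (r z) = 0 ->
  eps ^ 2 * y'' = f z (y z) -> s * r'' <= B ->
  0 < s * (y z - r z) - layer_barrier (B / m * eps ^ 2) R0 (sqrt m / eps) z ->
  0 < s * (y'' - r'') - R0 * (sqrt m / eps) ^ 2 * layer_profile (sqrt m / eps) z.
Proof.
  intros Hfy Hfy_ge Hm Heps HB HR0 Hs Hz Hroot Hy'' Hr'' Hpos.
  unfold layer_barrier in Hpos.
  set (E := layer_profile (sqrt m / eps) z) in *.
  assert (HE : 0 <= E) by (left; apply layer_profile_pos).
  assert (Ha : (sqrt m / eps) ^ 2 * eps ^ 2 = m).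
  { replace ((sqrt m / eps) ^ 2 * eps ^ 2) with (sqrt m * sqrt m) by (field; lra).
    apply sqrt_sqrt; lra. }
  assert (HK : m * (B / m * eps ^ 2) = B * eps ^ 2) by (field; lra).
  assert (Hsf : m * (s * (y z - r z)) <= s * f z (y z)).
  { pose proof (Rmult_le_pos R0 E HR0 HE).
    assert (0 <= B / m * eps ^ 2)
      by (apply Rmult_le_pos; [apply Rdiv_le_0_compat|apply pow2_ge_0]; lra).
    destruct Hs as [-> | ->].
    - pose proof (f_increment_ge f fy m Hfy Hfy_ge z (r z) (y z) Hz ltac:(nra)).
      rewrite Hroot in *. lra.
    - pose proof (f_increment_ge f fy m Hfy Hfy_ge z (y z) (r z) Hz ltac:(nra)).
      rewrite Hroot in *. lra. }
  apply (Rmult_lt_reg_r (eps ^ 2)); [apply pow_lt; lra|].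
  replace ((s * (y'' - r'') - R0 * (sqrt m / eps) ^ 2 * E) * eps ^ 2)
    with (s * (eps ^ 2 * y'') - s * r'' * eps ^ 2 - (sqrt m / eps) ^ 2 * eps ^ 2 * (R0 * E)) by ring.
  rewrite Ha.
  rewrite Hy''. assert (0 < eps ^ 2) by (apply pow_lt; lra). nra.
Qed.

(* The constant [B eps^2 / m] absorbs the [O(eps^2)] defect of [r], and the two
   boundary-layer exponentials absorb the mismatch [y - r = -r] at [0] and [1]. *)
Lemma solution_comparison (f fy : R -> R -> R) m eps (y r : R -> R) B :
  is_pdy f fy -> (forall x t, 0 <= x <= 1 -> m <= fy x t) -> 0 < m -> 0 < eps ->
  is_solution eps f y -> reduced_solution f r B ->
  forall x, 0 <= x <= 1 ->
    Rabs (y x - r x) <= layer_barrier (B / m * eps ^ 2) (Rabs (r 0) + Rabs (r 1)) (sqrt m / eps) x.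
Proof.
  intros Hfy Hfy_ge Hm Heps Hsol (Hr & Hroot & r' & r'' & Dr & Dr' & Hr'') x Hx.
  set (a := sqrt m / eps). set (K := B / m * eps ^ 2). set (R0 := Rabs (r 0) + Rabs (r 1)).
  pose proof (Rabs_pos (r 0)). pose proof (Rabs_pos (r 1)).
  assert (HB : 0 <= B)
    by (pose proof (Hr'' (1 / 2) ltac:(lra)); pose proof (Rabs_pos (r'' (1 / 2))); lra).
  assert (HK : 0 <= K) by (apply Rmult_le_pos; [apply Rdiv_le_0_compat|apply pow2_ge_0]; lra).
  destruct Hsol as [Hyc [[y' [y'' Hy]] [Hy0 Hy1]]].
  assert (Hyc01 : cont01 y) by (apply (solution_cont01 eps f); repeat split; eauto).
  assert (side : forall s, s = 1 \/ s = -1 -> s * (y x - r x) - layer_barrier K R0 a x <= 0).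
  { intros s Hs.
    pose proof (fun z => layer_barrier_derivatives K R0 a z) as Db.
    apply (max_principle (fun x => s * (y x - r x) - layer_barrier K R0 a x)
             (fun x => s * (y' x - r' x) - R0 * (- a * exp (- a * x) + a * exp (- a * (1 - x))))
             (fun x => s * (y'' x - r'' x) - R0 * a ^ 2 * layer_profile a x));
      [| | | | | | exact Hx].
    - apply cont01_minus; [apply cont01_mult; [|now apply cont01_minus]|];
        apply cont01_continuity; intros c; [now apply continuity_pt_const|].
      apply derivable_continuous_pt. eexists. exact (proj1 (Db c)).
    - pose proof (layer_barrier_endpoint_ge K R0 a 0 HK ltac:(unfold R0; lra) ltac:(now left)).
      rewrite Hy0. unfold R0 in *.
      destruct Hs as [-> | ->]; unfold Rabs in *; repeat destruct Rcase_abs; lra.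
    - pose proof (layer_barrier_endpoint_ge K R0 a 1 HK ltac:(unfold R0; lra) ltac:(now right)).
      rewrite Hy1. unfold R0 in *.
      destruct Hs as [-> | ->]; unfold Rabs in *; repeat destruct Rcase_abs; lra.
    - intros z Hz. apply derivable_pt_lim_minus; [|exact (proj1 (Db z))].
      apply derivable_pt_lim_scal, derivable_pt_lim_minus; [apply Hy|apply Dr]; exact Hz.
    - intros z Hz. apply derivable_pt_lim_minus; [|exact (proj2 (Db z))].
      apply derivable_pt_lim_scal, derivable_pt_lim_minus; [apply Hy|apply Dr']; exact Hz.
    - intros z Hz Hpos.
      assert (Hsr : s * r'' z <= B).
      { pose proof (Hr'' z Hz). pose proof (Rle_abs (r'' z)). pose proof (Rle_abs (- r'' z)).
        rewrite Rabs_Ropp in *. destruct Hs as [-> | ->]; lra. }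
      exact (layer_barrier_defect_pos f fy m eps B R0 s y r (y'' z) (r'' z) z Hfy Hfy_ge Hm Heps
               HB ltac:(unfold R0; lra) Hs ltac:(lra) (Hroot z ltac:(lra))
               (proj2 (proj2 (Hy z Hz))) Hsr Hpos). }
  pose proof (side 1 (or_introl eq_refl)). pose proof (side (-1) (or_intror eq_refl)).
  unfold Rabs. destruct Rcase_abs; lra.
Qed.

Lemma shishkin_layer_exp eps m N x :
  0 < eps -> 0 < m -> (0 < N)%nat -> 2 * eps * ln (INR N) / sqrt m <= x ->
  exp (- (sqrt m / eps) * x) <= / INR N ^ 2.
Proof.
  intros Heps Hm HN Hx.
  assert (HN0 : 0 < INR N) by (apply lt_0_INR; lia).
  assert (Hsm : 0 < sqrt m) by (apply sqrt_lt_R0; lra).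
  replace (/ INR N ^ 2) with (exp (- (sqrt m / eps) * (2 * eps * ln (INR N) / sqrt m))).
  - destruct (Req_dec x (2 * eps * ln (INR N) / sqrt m)) as [->|Hne]; [lra|].
    left. apply exp_increasing.
    assert (0 < sqrt m / eps) by (apply Rdiv_lt_0_compat; lra). nra.
  - replace (- (sqrt m / eps) * (2 * eps * ln (INR N) / sqrt m)) with (- (ln (INR N) + ln (INR N)))
      by (field; lra).
    rewrite exp_Ropp, exp_plus, exp_ln by lra. f_equal. ring.
Qed.

Lemma layer_barrier_outer B m eps C0 R0 (N : nat) x :
  0 < m -> 0 < eps -> (0 < N)%nat -> 0 <= B -> 0 <= R0 -> eps <= C0 / INR N ->
  shlambda eps m N = 2 * eps * ln (INR N) / sqrt m ->
  shlambda eps m N <= x <= 1 - shlambda eps m N ->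
  layer_barrier (B / m * eps ^ 2) R0 (sqrt m / eps) x <= (B / m * C0 ^ 2 + 2 * R0) / INR N ^ 2.
Proof.
  intros Hm Heps HN HB HR0 HepsN Hlam Hx.
  assert (HN0 : 0 < INR N) by (apply lt_0_INR; lia).
  pose proof (shishkin_layer_exp eps m N x Heps Hm HN ltac:(lra)).
  pose proof (shishkin_layer_exp eps m N (1 - x) Heps Hm HN ltac:(lra)).
  assert (Heps2 : eps ^ 2 <= C0 ^ 2 / INR N ^ 2).
  { replace (C0 ^ 2 / INR N ^ 2) with ((C0 / INR N) ^ 2) by (field; lra). apply pow_incr; lra. }
  assert (B / m * eps ^ 2 <= B / m * (C0 ^ 2 / INR N ^ 2))
    by (apply Rmult_le_compat_l; [apply Rdiv_le_0_compat|]; lra).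
  unfold layer_barrier, layer_profile.
  replace ((B / m * C0 ^ 2 + 2 * R0) / INR N ^ 2)
    with (B / m * (C0 ^ 2 / INR N ^ 2) + R0 * (/ INR N ^ 2 + / INR N ^ 2)) by (field; lra).
  apply Rplus_le_compat; [lra|]. apply Rmult_le_compat_l; lra.
Qed.

Lemma ln_INR_nonneg (N : nat) : (0 < N)%nat -> 0 <= ln (INR N).
Proof.
  intros HN. destruct (Nat.eq_dec N 1) as [->|HN1]; [rewrite INR_1, ln_1; lra|].
  left. rewrite <- ln_1. apply ln_increasing; [lra|]. apply (lt_INR 1). lia.
Qed.

Definition outer_error (m C0 B : R) (r : R -> R) : R :=
  B / m * C0 ^ 2 + 2 * (Rabs (r 0) + Rabs (r 1)).

Lemma outer_error_nonneg m C0 B r : 0 < m -> 0 <= B -> 0 <= outer_error m C0 B r.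
Proof.
  intros Hm HB. unfold outer_error. pose proof (Rabs_pos (r 0)). pose proof (Rabs_pos (r 1)).
  assert (0 <= B / m * C0 ^ 2) by (apply Rmult_le_pos; [apply Rdiv_le_0_compat|apply pow2_ge_0]; lra).
  lra.
Qed.

Lemma solution_outer_estimate (f fy : R -> R -> R) m eps C0 (N : nat) (y r : R -> R) B :
  is_pdy f fy -> (forall x t, 0 <= x <= 1 -> m <= fy x t) -> 0 < m -> 0 < eps ->
  (0 < N)%nat -> eps <= C0 / INR N -> shlambda eps m N = 2 * eps * ln (INR N) / sqrt m ->
  is_solution eps f y -> 0 <= B -> reduced_solution f r B ->
  forall x, shlambda eps m N <= x <= 1 - shlambda eps m N ->
    Rabs (y x - r x) <= outer_error m C0 B r / INR N ^ 2.
Proof.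
  intros Hfy Hfy_ge Hm Heps HN HepsN Hlam Hsol HB Hred x Hx.
  assert (Hlam0 : 0 <= shlambda eps m N).
  { rewrite Hlam. pose proof (ln_INR_nonneg N HN).
    apply Rdiv_le_0_compat; [nra|apply sqrt_lt_R0; lra]. }
  eapply Rle_trans; [apply (solution_comparison f fy m eps y r B); auto; lra|].
  apply layer_barrier_outer; auto.
  pose proof (Rabs_pos (r 0)). pose proof (Rabs_pos (r 1)). lra.
Qed.

(** * The scheme on the Shishkin mesh *)

Lemma cosh_ratio_bounds t0 t :
  0 < t0 <= t -> 0 <= (1 + cosh t) / (cosh t - 1) <= 1 + 16 / t0 ^ 2.
Proof.
  intros Ht. pose proof (cosh_sub1_ge t ltac:(lra)).
  assert (Ht2 : t0 ^ 2 <= t ^ 2) by (apply pow_incr; lra).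
  assert (Ht02 : 0 < t0 ^ 2) by (apply pow_lt; lra).
  replace ((1 + cosh t) / (cosh t - 1)) with (1 + 2 / (cosh t - 1)) by (field; lra).
  assert (0 < 2 / (cosh t - 1)) by (apply Rdiv_lt_0_compat; lra).
  split; [lra|]. apply Rplus_le_compat_l.
  replace (16 / t0 ^ 2) with (2 / (t0 ^ 2 / 8)) by (field; lra).
  apply Rmult_le_compat_l; [lra|]. apply Rinv_le_contravar; lra.
Qed.

(* With [t = beta * H], [d = beta cosh t / sinh t], [a = beta / sinh t] and
   [dd = d - a = beta (cosh t - 1) / sinh t] on both sides of [x i], the weights
   [3 a + d + dd] equal [2 beta (1 + cosh t) / sinh t]. *)
Lemma Gop_uniform gamma eps f N (x v : nat -> R) i H :
  (i <> 0)%nat -> (i <> N)%nat -> 0 < gamma -> 0 < eps -> 0 < H ->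
  x (i - 1)%nat = x i - H -> x (S i) = x i + H ->
  let t := sqrt gamma / eps * H in
  Gop gamma eps f N x v i =
    gamma * ((1 + cosh t) / (cosh t - 1)) * (v (i - 1)%nat - 2 * v i + v (S i))
    - (f (x (i - 1)%nat) (v (i - 1)%nat) + 2 * f (x i) (v i) + f (x (S i)) (v (S i))).
Proof.
  intros Hi0 HiN Hg He HH E1 E3 t.
  assert (Hst : hstep x i = H /\ hstep x (S i) = H).
  { unfold hstep. rewrite E1, Nat.sub_succ, Nat.sub_0_r, E3. split; ring. }
  assert (Ht : 0 < t) by (apply Rmult_lt_0_compat; [apply Rdiv_lt_0_compat; [apply sqrt_lt_R0|]|]; lra).
  pose proof (cosh_sub1_ge t ltac:(lra)).
  assert (0 < t ^ 2 / 8) by (apply Rdiv_lt_0_compat; [apply pow_lt|]; lra).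
  assert (Hs : 0 < sinh t) by (unfold sinh; pose proof (exp_increasing (- t) t ltac:(lra)); lra).
  unfold Gop, ddcoef, dcoef, acoef. rewrite (proj1 Hst), (proj2 Hst). fold t.
  apply Nat.eqb_neq in Hi0, HiN. rewrite Hi0, HiN.
  unfold tanh. set (b := sqrt gamma / eps) in *.
  assert (0 < b) by (apply Rdiv_lt_0_compat; [apply sqrt_lt_R0|]; lra).
  field. repeat split; try lra. nra.
Qed.

Lemma quarter_indices N :
  (N mod 4 = 0)%nat ->
  N = (4 * (N / 4))%nat /\ (N / 2 = 2 * (N / 4))%nat /\ (3 * N / 4 = 3 * (N / 4))%nat.
Proof.
  intros HN. pose proof (Nat.div_mod N 4). pose proof (Nat.div_mod N 2).
  pose proof (Nat.mod_upper_bound N 2). pose proof (Nat.div_mod (3 * N) 4).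
  pose proof (Nat.mod_upper_bound (3 * N) 4). lia.
Qed.

Lemma shmesh_coarse eps m N j :
  (j <= N / 4)%nat -> shmesh eps m N j = INR j * (4 * shlambda eps m N / INR N).
Proof. intros Hj. unfold shmesh. now destruct (Nat.leb_spec j (N / 4)); [|lia]. Qed.

Lemma shmesh_transition eps m N :
  (0 < N)%nat -> (N mod 4 = 0)%nat -> shmesh eps m N (N / 4) = shlambda eps m N.
Proof.
  intros HN0 HN. rewrite shmesh_coarse by lia.
  destruct (quarter_indices N HN) as [E _].
  assert (HNq : INR N = 4 * INR (N / 4)) by (rewrite E at 1; rewrite mult_INR; simpl; ring).
  assert (0 < INR (N / 4)) by (apply lt_0_INR; lia).
  rewrite HNq. field. lra.
Qed.

Lemma shmesh_fine eps m N j :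
  (0 < N)%nat -> (N mod 4 = 0)%nat -> (N / 4 <= j <= 3 * N / 4)%nat ->
  shmesh eps m N j =
    shlambda eps m N + (INR j - INR (N / 4)) * (2 * (1 - 2 * shlambda eps m N) / INR N).
Proof.
  intros HN0 HN Hj. destruct (Nat.eq_dec j (N / 4)) as [->|Hne].
  - rewrite shmesh_transition by assumption. ring.
  - unfold shmesh. destruct (Nat.leb_spec j (N / 4)); [lia|].
    destruct (Nat.leb_spec j (3 * N / 4)); [|lia]. now rewrite minus_INR by lia.
Qed.

Lemma shlambda_pos eps m N :
  0 < eps -> 0 < m -> (1 < N)%nat -> shlambda eps m N = 2 * eps * ln (INR N) / sqrt m ->
  0 < shlambda eps m N.
Proof.
  intros Heps Hm HN ->.
  assert (0 < ln (INR N)) by (rewrite <- ln_1; apply ln_increasing; [lra|apply (lt_INR 1); lia]).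
  apply Rdiv_lt_0_compat; [nra|apply sqrt_lt_R0; lra].
Qed.

(* The lower bound on [x (i - 1)] excludes [i = N/4], whose stencil reaches into the fine
   mesh of the layer. *)
Lemma shmesh_uniform_stencil eps m N i :
  0 < eps -> 0 < m -> (0 < N)%nat -> (N mod 4 = 0)%nat ->
  shlambda eps m N = 2 * eps * ln (INR N) / sqrt m ->
  (N / 4 <= i <= N / 2 - 1)%nat ->
  (forall j, (i - 1 <= j <= i + 1)%nat ->
     shmesh eps m N (N / 4) <= shmesh eps m N j <= 1 / 2) ->
  exists H, 1 / INR N <= H <= 2 / INR N /\ (i <> 0)%nat /\ (i <> N)%nat /\
    shmesh eps m N (i - 1) = shmesh eps m N i - H /\
    shmesh eps m N (S i) = shmesh eps m N i + H /\
    shlambda eps m N <= shmesh eps m N i - H /\ shmesh eps m N i + H <= 1 / 2.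
Proof.
  intros Heps Hm HN0 HN Hlam Hi Hj.
  destruct (quarter_indices N HN) as (E4 & E2 & E3).
  pose proof (shlambda_pos eps m N Heps Hm ltac:(lia) Hlam) as Hlam0.
  assert (Hlam14 : shlambda eps m N <= 1 / 4) by apply Rmin_l.
  assert (HNR : 0 < INR N) by (apply lt_0_INR; lia).
  assert (Hiq : (N / 4 < i)%nat).
  { destruct (Nat.eq_dec i (N / 4)) as [Hiq|]; [|lia]. exfalso.
    destruct (Hj (i - 1)%nat ltac:(lia)) as [Hx _]. subst i.
    rewrite !shmesh_coarse, minus_INR, INR_1 in Hx by lia.
    assert (0 < 4 * shlambda eps m N / INR N) by (apply Rdiv_lt_0_compat; lra).
    nra. }
  set (H := 2 * (1 - 2 * shlambda eps m N) / INR N).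
  assert (E1 : shmesh eps m N (i - 1) = shmesh eps m N i - H /\
               shmesh eps m N (S i) = shmesh eps m N i + H).
  { rewrite !(shmesh_fine eps m N) by lia. rewrite minus_INR, INR_1, S_INR by lia.
    unfold H. split; ring. }
  exists H. split; [unfold H; split; apply Rmult_le_compat_r; try (left; apply Rinv_0_lt_compat); lra|].
  rewrite <- (proj1 E1), <- (proj2 E1), <- (shmesh_transition eps m N HN0 HN).
  repeat split; try lia; try apply E1; apply Hj; lia.
Qed.

Lemma scaled_step_ge a eps C0 (N : nat) H :
  0 <= a -> 0 < eps -> (0 < N)%nat -> eps <= C0 / INR N -> 1 / INR N <= H ->
  a / C0 <= a / eps * H.
Proof.
  intros Ha Heps HN HepsN HH.
  assert (HNR : 0 < INR N) by (apply lt_0_INR; lia).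
  assert (HeN : eps * INR N <= C0).
  { apply (Rmult_le_compat_r (INR N)) in HepsN; [|lra].
    now replace (C0 / INR N * INR N) with C0 in HepsN by (field; lra). }
  apply Rle_trans with (a / eps * (1 / INR N)).
  - replace (a / eps * (1 / INR N)) with (a / (eps * INR N)) by (field; lra).
    apply Rmult_le_compat_l; [exact Ha|]. apply Rinv_le_contravar; nra.
  - apply Rmult_le_compat_l; [|exact HH]. apply Rdiv_le_0_compat; lra.
Qed.

Lemma stencil_estimate (g : R -> R -> R) (y r : R -> R) gamma c delta rho xi H :
  0 <= gamma -> 0 <= c ->
  (forall x, xi - H <= x <= xi + H -> Rabs (y x - r x) <= delta) ->
  (forall x, xi - H <= x <= xi + H -> Rabs (g x (y x)) <= gamma * Rabs (y x - r x)) ->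
  Rabs (r (xi - H) - 2 * r xi + r (xi + H)) <= rho ->
  0 <= H ->
  Rabs (gamma * c * (y (xi - H) - 2 * y xi + y (xi + H))
        - (g (xi - H) (y (xi - H)) + 2 * g xi (y xi) + g (xi + H) (y (xi + H))))
    <= gamma * c * (rho + 4 * delta) + 4 * gamma * delta.
Proof.
  intros Hg Hc Hb Hgb Hr HH.
  assert (Hgd : forall x, xi - H <= x <= xi + H -> Rabs (g x (y x)) <= gamma * delta).
  { intros x Hx. eapply Rle_trans; [now apply Hgb|]. apply Rmult_le_compat_l; auto. }
  pose proof (Hb (xi - H) ltac:(lra)). pose proof (Hgd (xi - H) ltac:(lra)).
  pose proof (Hb xi ltac:(lra)). pose proof (Hgd xi ltac:(lra)).
  pose proof (Hb (xi + H) ltac:(lra)). pose proof (Hgd (xi + H) ltac:(lra)).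
  assert (HD : Rabs (y (xi - H) - 2 * y xi + y (xi + H)) <= rho + 4 * delta).
  { replace (y (xi - H) - 2 * y xi + y (xi + H)) with
      ((r (xi - H) - 2 * r xi + r (xi + H)) + (y (xi - H) - r (xi - H))
       - 2 * (y xi - r xi) + (y (xi + H) - r (xi + H))) by ring.
    unfold Rabs in *. repeat destruct Rcase_abs; lra. }
  assert (Hf : Rabs (g (xi - H) (y (xi - H)) + 2 * g xi (y xi) + g (xi + H) (y (xi + H)))
               <= 4 * gamma * delta) by (unfold Rabs in *; repeat destruct Rcase_abs; lra).
  set (D := y (xi - H) - 2 * y xi + y (xi + H)) in *.
  set (S := g (xi - H) (y (xi - H)) + 2 * g xi (y xi) + g (xi + H) (y (xi + H))) in *.
  pose proof (Rabs_triang (gamma * c * D) (- S)) as Htri.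
  rewrite Rabs_Ropp, !Rabs_mult, (Rabs_right gamma), (Rabs_right c) in Htri by lra.
  assert (gamma * c * Rabs D <= gamma * c * (rho + 4 * delta))
    by (apply Rmult_le_compat_l; [apply Rmult_le_pos|]; lra).
  unfold Rminus. lra.
Qed.

Lemma Gop_outer_estimate (f fy : R -> R -> R) m gamma C0 (r : R -> R) B eps (N : nat)
    (y : R -> R) i :
  is_pdy f fy -> 0 < m -> (forall x t, 0 <= x <= 1 -> m <= fy x t) ->
  (forall x t, 0 <= x <= 1 -> fy x t <= gamma) ->
  0 <= B -> reduced_solution f r B ->
  0 < eps -> (0 < N)%nat -> (N mod 4 = 0)%nat ->
  shlambda eps m N = 2 * eps * ln (INR N) / sqrt m -> eps <= C0 / INR N ->
  is_solution eps f y ->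
  (N / 4 <= i <= N / 2 - 1)%nat ->
  (forall j : nat, (i - 1 <= j <= i + 1)%nat ->
     shmesh eps m N (N / 4) <= shmesh eps m N j <= 1 / 2) ->
  Rabs (Gop gamma eps f N (shmesh eps m N) (fun j => y (shmesh eps m N j)) i)
    <= gamma * ((1 + 16 / (sqrt gamma / C0) ^ 2) * (8 * B + 4 * outer_error m C0 B r)
                + 4 * outer_error m C0 B r) / INR N ^ 2.
Proof.
  intros Hfy Hm Hfy_ge Hfy_le HB Hred Heps HN HN4 Hlam HepsN Hsol Hi Hj.
  assert (Hgamma : 0 < gamma) by (pose proof (Hfy_ge 0 0); pose proof (Hfy_le 0 0); lra).
  destruct (shmesh_uniform_stencil eps m N i Heps Hm HN HN4 Hlam Hi Hj)
    as (H & HH & Hi0 & HiN & E1 & E3 & Hleft & Hright).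
  assert (HNR : 0 < INR N) by (apply lt_0_INR; lia).
  assert (HH0 : 0 < H) by (assert (0 < 1 / INR N) by (apply Rdiv_lt_0_compat; lra); lra).
  assert (HC0 : 0 < C0) by (apply (Rmult_lt_reg_r (/ INR N)); [apply Rinv_0_lt_compat|]; lra).
  assert (shlambda eps m N <= 1 / 4) by apply Rmin_l.
  pose proof (shlambda_pos eps m N Heps Hm ltac:(destruct (quarter_indices N HN4); lia) Hlam).
  pose proof (outer_error_nonneg m C0 B r Hm HB).
  rewrite (Gop_uniform gamma eps f N _ _ i H Hi0 HiN Hgamma Heps HH0 E1 E3).
  cbv zeta beta. rewrite E1, E3.
  destruct (cosh_ratio_bounds (sqrt gamma / C0) (sqrt gamma / eps * H)) as [Hc0 Hc].
  { assert (Hsg : 0 < sqrt gamma) by (apply sqrt_lt_R0; lra).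
    split; [now apply Rdiv_lt_0_compat|]. apply (scaled_step_ge _ _ _ N); auto; lra. }
  eapply Rle_trans.
  { apply (stencil_estimate f y r gamma _ (outer_error m C0 B r / INR N ^ 2) (8 * B / INR N ^ 2));
      try lra.
    - intros x Hx. apply (solution_outer_estimate f fy m eps C0 N); auto; lra.
    - intros x Hx. apply (f_abs_le_of_root f fy m Hm Hfy Hfy_ge); auto; [lra|apply Hred; lra].
    - eapply Rle_trans; [apply (reduced_second_difference f r B); auto; lra|].
      replace (8 * B / INR N ^ 2) with (2 * B * (2 / INR N) ^ 2) by (field; lra).
      apply Rmult_le_compat_l; [lra|]. apply pow_incr; lra. }
  set (c := (1 + cosh (sqrt gamma / eps * H)) / (cosh (sqrt gamma / eps * H) - 1)) in *.
  set (Phi := outer_error m C0 B r) in *.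
  assert (c * (8 * B + 4 * Phi) <= (1 + 16 / (sqrt gamma / C0) ^ 2) * (8 * B + 4 * Phi))
    by (apply Rmult_le_compat_r; lra).
  replace (gamma * c * (8 * B / INR N ^ 2 + 4 * (Phi / INR N ^ 2)) + 4 * gamma * (Phi / INR N ^ 2))
    with (gamma * (c * (8 * B + 4 * Phi) + 4 * Phi) / INR N ^ 2) by (field; lra).
  apply Rmult_le_compat_r; [left; apply Rinv_0_lt_compat, pow_lt; lra|].
  apply Rmult_le_compat_l; lra.
Qed.

Theorem lemma3 (k : nat) (f fy : R -> R -> R) (m gamma C0 : R) :
  (2 <= k)%nat ->
  Ck k f ->
  is_pdy f fy ->
  0 < m ->
  (forall x t, 0 <= x <= 1 -> m <= fy x t) ->
  (forall x t, 0 <= x <= 1 -> fy x t <= gamma) ->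
  0 < C0 ->
  exists C : R, 0 < C /\
    forall (eps : R) (N : nat) (y : R -> R),
      0 < eps ->
      (0 < N)%nat -> (N mod 4 = 0)%nat ->
      shlambda eps m N = 2 * eps * ln (INR N) / sqrt m ->
      eps <= C0 / INR N ->
      is_solution eps f y ->
      forall i : nat,
        (N / 4 <= i <= N / 2 - 1)%nat ->
        (forall j : nat, (i - 1 <= j <= i + 1)%nat ->
           shmesh eps m N (N / 4) <= shmesh eps m N j <= 1 / 2) ->
        Rabs (Gop gamma eps f N (shmesh eps m N)
                (fun j => y (shmesh eps m N j)) i) <= C / INR N ^ 2.
Proof.
  intros Hk HCk Hfy Hm Hfy_ge Hfy_le HC0.
  destruct (reduced_solution_exists k f fy m Hk HCk Hfy Hm Hfy_ge) as (r & B & HB & Hred).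
  pose proof (outer_error_nonneg m C0 B r Hm HB).
  assert (Hgamma : 0 < gamma) by (pose proof (Hfy_ge 0 0); pose proof (Hfy_le 0 0); lra).
  assert (0 <= 16 / (sqrt gamma / C0) ^ 2)
    by (apply Rdiv_le_0_compat; [lra|apply pow_lt, Rdiv_lt_0_compat; [apply sqrt_lt_R0|]; lra]).
  set (C := gamma * ((1 + 16 / (sqrt gamma / C0) ^ 2) * (8 * B + 4 * outer_error m C0 B r)
                     + 4 * outer_error m C0 B r)).
  assert (HC : 0 <= C) by (unfold C; apply Rmult_le_pos; nra).
  exists (C + 1). split; [lra|].
  intros eps N y Heps HN HN4 Hlam HepsN Hsol i Hi Hj.
  eapply Rle_trans; [apply (Gop_outer_estimate f fy m gamma C0 r B); auto|].
  assert (0 < INR N ^ 2) by (apply pow_lt, lt_0_INR; lia).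
  apply Rmult_le_compat_r; [left; now apply Rinv_0_lt_compat|unfold C; lra].
Qed.
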